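(* Let $Y$ be a compact metric space. Then $\widetilde{CY}$ is equivariantly homotopy equivalent to $Y^\urcorner$.
   Context: For a space $Z$, $\tilde Z=Z\times Z\setminus\{(z,z)\mid z\in Z\}$ with the involution $(z,z')\mapsto(z',z)$. $CY=Y\times[0,1]/Y\times\{0\}$ is the cone, and $[y,s]$ denotes the image of $(y,s)$. $Y^\urcorner\subset\widetilde{CY}$ is the subset of all pairs $\big([y,s],[y',s']\big)$ such that $s=1$ or $s'=1$, and such that $y\ne y'$ whenever $s<1$ or $s'<1$; it is invariant under the involution. Equivariant homotopy equivalence is with respect to these involutions. *)

From HB Require Import structures.
From mathcomp Require Import all_boot all_order all_algebra generic_quotient.
From mathcomp Require Import all_classical all_reals all_analysis.
Import Order.TTheory GRing.Theory Num.Theory.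
Import numFieldTopology.Exports.

Set Implicit Arguments.
Unset Strict Implicit.
Unset Printing Implicit Defensive.

Local Open Scope classical_set_scope.
Local Open Scope ring_scope.
Local Open Scope quotient_scope.

Definition unit_int (R : realType) : set R := [set t : R | 0 <= t <= 1].
Arguments unit_int R : clear implicits.
Notation unitI R := (set_type (unit_int R)).

Definition config (Z : Type) : set (Z * Z) := [set p | p.1 <> p.2].
Arguments config Z : clear implicits.
Definition swap (Z : Type) (p : Z * Z) : Z * Z := (p.2, p.1).

(* The cone CY = Y x [0,1] / Y x {0}, with the quotient topology *)
Section cone.
Context {R : realType} (Y : topologicalType).

Definition cone_base : topologicalType := (Y * unitI R)%type.
Local Notation T := cone_base.

Let cone_rel' (a b : T) :=
  (a == b) || ((val a.2 == 0) && (val b.2 == 0)).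

Local Lemma cone_rel_refl : reflexive cone_rel'.
Proof. by move=> ?; rewrite /cone_rel' eqxx. Qed.

Local Lemma cone_rel_sym : symmetric cone_rel'.
Proof. by move=> a b; rewrite /cone_rel' eq_sym andbC. Qed.

Local Lemma cone_rel_trans : transitive cone_rel'.
Proof.
move=> b a c /predU1P[-> //|] + /predU1P[<- //|]; rewrite /cone_rel'.
by move=> /andP[/eqP -> /eqP ->] /andP[_ /eqP ->]; rewrite !eqxx orbT.
Qed.

Definition cone_rel := EquivRel _ cone_rel_refl cone_rel_sym cone_rel_trans.

Definition cone := {eq_quot cone_rel}.
HB.instance Definition _ := Topological.copy cone (quotient_topology cone).
HB.instance Definition _ := Quotient.on cone.

Definition cone_pt (y : Y) (s : unitI R) : cone := \pi_cone (y, s).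

Definition cone_corner : set (cone * cone) :=
  config cone `&`
  [set p | exists (y y' : Y) (s s' : unitI R),
      [/\ p = (cone_pt y s, cone_pt y' s'),
          (val s = 1 \/ val s' = 1) &
          ((val s < 1 \/ val s' < 1) -> y <> y')]].
End cone.
Arguments cone_corner {R} Y.
Arguments cone_pt {R Y}.

Definition equiv_homotopic (R : realType) {X : topologicalType} (A : set X)
    (s : X -> X) (f0 f1 : X -> X) : Prop :=
  exists H : X * R -> X,
    [/\ {within A `*` unit_int R, continuous H},
        (forall x t, A x -> unit_int R t -> A (H (x, t))),
        (forall x, A x -> H (x, 0) = f0 x),
        (forall x, A x -> H (x, 1) = f1 x) &
        forall x t, A x -> unit_int R t -> H (s x, t) = s (H (x, t))].

Definition equiv_htpy_equiv (R : realType) {X X' : topologicalType}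
    (A : set X) (s : X -> X) (B : set X') (s' : X' -> X') : Prop :=
  exists (f : X -> X') (g : X' -> X),
    [/\ {within A, continuous f} /\ {within B, continuous g},
        (forall x, A x -> B (f x)) /\ (forall x, B x -> A (g x)),
        (forall x, A x -> f (s x) = s' (f x)) /\
        (forall x, B x -> g (s' x) = s (g x)),
        equiv_homotopic R A s (g \o f) id &
        equiv_homotopic R B s' (f \o g) id].

(* Write points of the cone as [y, r]. For distinct points with radii s >= s',
   let e = min(s, s') * min(1, d(y, y')) be their separation; it vanishes exactly
   when the two points lie on one ray or one of them is the apex. Pushing the
   farther point to the rim and the nearer one to radius s' e / (s (e + s - s'))
   lands in Y^corner: a nearer point on the ray of the farther one goes to the
   apex, and points of equal radius both go to the rim. Interpolating the radii
   linearly back to the identity never makes the two points collide, commutes with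
   the swap and preserves Y^corner, so this map and the inclusion of Y^corner are
   inverse equivariant homotopy equivalences. Compactness of Y (through the tube
   lemma) makes a neighbourhood of the apex contain all points of small radius,
   which gives continuity where a point reaches the apex. *)

From HB Require Import structures.
From mathcomp Require Import all_boot all_order all_algebra generic_quotient.
From mathcomp Require Import all_classical all_reals all_analysis.
From mathcomp Require Import ring lra.
Import Order.TTheory GRing.Theory Num.Theory.
Import numFieldTopology.Exports.
Set Implicit Arguments.
Unset Strict Implicit.
Unset Printing Implicit Defensive.
Local Open Scope classical_set_scope.
Local Open Scope ring_scope.
Local Open Scope quotient_scope.

Section cone_coordinates.
Context {R : realType} {Y : topologicalType}.
Local Notation C := (cone (R:=R) Y).

(* The direction of the apex is that of an arbitrary representative. *)
Definition cone_radI (c : C) : unitI R := (repr c).2.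
Definition cone_rad (c : C) : R := val (cone_radI c).
Definition cone_dir (c : C) : Y := (repr c).1.

Lemma cone_ptK (c : C) : cone_pt (cone_dir c) (cone_radI c) = c.
Proof. by rewrite /cone_pt -surjective_pairing reprK. Qed.

Lemma cone_pt_eqP y s y' s' :
  cone_pt y s = cone_pt y' s' :> C <->
  (y = y' /\ s = s') \/ (val s = 0 /\ val s' = 0).
Proof.
split => [/eqmodP /orP[/eqP[-> ->]|/andP[/eqP -> /eqP ->]]|]; [by left|by right|].
by case=> [[-> ->]//|[s0 s'0]]; apply/eqmodP/orP; right; rewrite s0 s'0 eqxx.
Qed.

Lemma cone_rad_pt y s : cone_rad (cone_pt y s : C) = val s.
Proof.
rewrite /cone_rad; have /cone_pt_eqP[[_ ->]|[-> ->]] // := cone_ptK (cone_pt y s : C).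
Qed.

Lemma cone_dir_pt y s : 0 < val s -> cone_dir (cone_pt y s : C) = y.
Proof.
have /cone_pt_eqP[[-> _]|[_ ->]] // := cone_ptK (cone_pt y s : C).
by rewrite ltxx.
Qed.

Lemma cone_rad_ge0 (c : C) : 0 <= cone_rad c.
Proof. by case/andP: (set_valP (cone_radI c)). Qed.

Lemma cone_rad_le1 (c : C) : cone_rad c <= 1.
Proof. by case/andP: (set_valP (cone_radI c)). Qed.

Lemma cone_eq (a b : C) : cone_rad a = cone_rad b ->
  cone_rad a = 0 \/ cone_dir a = cone_dir b -> a = b.
Proof.
move=> rab ab; rewrite -(cone_ptK a) -(cone_ptK b) cone_pt_eqP.
case: ab => [a0|dab]; first by right; move: rab a0; rewrite /cone_rad => <-.
by left; split => //; apply: val_inj.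
Qed.

Lemma cone_corner_swap (a b : C) : cone_corner Y (a, b) -> cone_corner Y (b, a).
Proof.
case=> ab [y [y' [s [s' [[ea eb] s1 ss']]]]]; subst a b.
split; first by move=> /esym.
rewrite /mkset; exists y', y, s', s; split => //; first by case: s1; [right|left].
by move=> /or_comm /ss' + /esym.
Qed.

Lemma cone_corner_rad (a b : C) : cone_corner Y (a, b) ->
  cone_rad a = 1 \/ cone_rad b = 1.
Proof. by case=> _ [y [y' [s [s' [[-> ->]]]]]]; rewrite !cone_rad_pt. Qed.

Lemma cone_corner_dir (a b : C) : cone_corner Y (a, b) ->
  0 < cone_rad a -> 0 < cone_rad b -> cone_rad a < 1 \/ cone_rad b < 1 ->
  cone_dir a <> cone_dir b.
Proof.
case=> _ [y [y' [s [s' [[-> ->] _ ss']]]]]; rewrite !cone_rad_pt => s0 s'0.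
by rewrite !cone_dir_pt.
Qed.

End cone_coordinates.

Section cone_topology.
Context {R : realType} {Y : topologicalType}.
Local Notation C := (cone (R:=R) Y).

Lemma cone_pt_piE : (fun x : Y * unitI R => cone_pt x.1 x.2 : C) = \pi_C.
Proof. by apply: funext => -[]. Qed.

Lemma open_coneE (U : set C) :
  open U = open [set x : Y * unitI R | U (cone_pt x.1 x.2)].
Proof.
suff -> : [set x : Y * unitI R | U (cone_pt x.1 x.2)] = \pi_C @^-1` U by [].
by apply/seteqP; split => -[].
Qed.

Lemma continuous_cone_pt : continuous (fun x : Y * unitI R => cone_pt x.1 x.2 : C).
Proof. by rewrite cone_pt_piE; exact: pi_continuous. Qed.

Lemma continuous_val_snd : continuous (fun x : Y * unitI R => val x.2).
Proof.
by move=> x; apply: continuous_comp; [exact: cvg_snd|exact: initial_continuous].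
Qed.

Lemma continuous_cone_rad : continuous (@cone_rad R Y).
Proof.
apply/quotient_continuous.
have -> : cone_rad \o \pi_C = (fun x : Y * unitI R => val x.2).
  by apply: funext => -[y s] /=; rewrite -[\pi_C _]/(cone_pt y s) cone_rad_pt.
exact: continuous_val_snd.
Qed.

Lemma open_cone_dir (V : set Y) : open V ->
  open [set c : C | 0 < cone_rad c /\ V (cone_dir c)].
Proof.
move=> oV; rewrite open_coneE.
have -> : [set x : Y * unitI R | 0 < cone_rad (cone_pt x.1 x.2 : C) /\
                                V (cone_dir (cone_pt x.1 x.2 : C))] =
    (fun x => val x.2) @^-1` [set r : R | 0 < r] `&` fst @^-1` V.
  by apply/seteqP; split => -[y s] /=; rewrite cone_rad_pt => -[s0];
    rewrite cone_dir_pt.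
apply: openI; first by move: continuous_val_snd => /continuousP; apply; exact: open_gt.
by apply: (continuousP _).1 oV => x; exact: cvg_fst.
Qed.

Lemma cone_dir_continuous (c : C) : 0 < cone_rad c -> {for c, continuous cone_dir}.
Proof.
move=> c0 U /=; rewrite nbhsE => -[V [oV Vc] VU].
apply: (@filterS _ _ _ [set d | 0 < cone_rad d /\ V (cone_dir d)]).
  by move=> d [_ /VU].
by apply: open_nbhs_nbhs; split => //; exact: open_cone_dir.
Qed.

Lemma nbhs_unitI_ball (s0 : unitI R) (B : set (unitI R)) : nbhs s0 B ->
  exists2 d : R, 0 < d & forall s, `|val s - val s0| < d -> B s.
Proof.
rewrite nbhsE => -[_ [[W oW <-] Ws0] WB].
have /nbhs_ex[d Wd] : nbhs (val s0) W by exact: open_nbhs_nbhs.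
by exists d%:num => // s sd; apply: WB; apply: Wd; rewrite /ball /= distrC.
Qed.

Lemma cone_apex_nbhs (c : C) (U : set C) : compact [set: Y] ->
  cone_rad c = 0 -> nbhs c U ->
  exists2 e : R, 0 < e & forall d, cone_rad d < e -> U d.
Proof.
move=> cY c0 Uc.
pose P e y := forall s : unitI R, val s < e -> U (cone_pt y s).
have : \forall e \near 0^'+, [set: Y] `<=` P e.
  apply: (iffLR (compact_near_coveringP _) cY) => y _.
  have apex : cone_pt y (cone_radI c) = c by rewrite -{2}(cone_ptK c) cone_pt_eqP; right.
  have : nbhs (y, cone_radI c) [set x | U (cone_pt x.1 x.2)].
    by apply: continuous_cone_pt; rewrite /= apex.
  case=> -[A B] /= [Ay /nbhs_unitI_ball[d d0 Bd]] AB.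
  exists (A, [set e | e < d]) => /=; first by split => //; exact: nbhs_right_lt.
  case=> y' e /= [Ay' ed] s se; apply: (AB (y', s)); split => //=; apply: Bd.
  have -> : val (cone_radI c) = 0 := c0.
  rewrite subr0 ger0_norm; first exact: lt_trans se ed.
  by case/andP: (set_valP s).
move=> /(filterI (nbhs_right_gt 0))/filter_ex[e [e0 He]].
exists e => // d de; rewrite -(cone_ptK d); exact: He.
Qed.

Lemma cvg_cone_apex {T} (F : set_system T) {FF : Filter F} (h : T -> C) (c : C) :
  compact [set: Y] -> cone_rad c = 0 ->
  (fun z => cone_rad (h z)) @ F --> 0 -> h @ F --> c.
Proof.
move=> cY c0 hc U /(cone_apex_nbhs cY c0)[e e0 Ue].
by apply: filterS (cvgr_lt _ hc _ e0) => z; exact: Ue.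
Qed.

End cone_topology.

Section push_radius.
Context {R : realFieldType}.

(* The radius a point of radius s is pushed to when its partner has radius s' and
   the pair has separation e: 1 if s' <= s, and s e / (s' (e + s' - s)) if s < s'.
   The symmetric form makes it continuous across s = s'. *)
Definition push_den (s s' e : R) : R :=
  Num.max s s' * (e + 2 * Num.max s s' - s - s').
Definition push_rad (s s' e : R) : R := s * (e + Num.max s s' - s') / push_den s s' e.

Lemma push_denC (s s' e : R) : push_den s s' e = push_den s' s e.
Proof. by rewrite /push_den maxC; congr (_ * _); lra. Qed.

Lemma push_denE (s s' e : R) : s' <= s -> push_den s s' e = s * (e + s - s').
Proof. by move=> ss'; rewrite /push_den max_l //; congr (_ * _); lra. Qed.

Lemma push_rad_max (s s' e : R) : s' <= s -> push_den s s' e != 0 -> push_rad s s' e = 1.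
Proof. by move=> ss' D0; rewrite /push_rad max_l // -push_denE // divff. Qed.

Lemma push_rad_min0 (s s' : R) : s <= s' -> push_rad s s' 0 = 0.
Proof. by move=> ss'; rewrite /push_rad max_r // add0r subrr mulr0 mul0r. Qed.

Lemma push_rad_itv (s s' e : R) : 0 <= s -> 0 <= s' -> 0 <= e -> 0 < push_den s s' e ->
  0 <= push_rad s s' e <= 1.
Proof.
rewrite /push_rad /push_den => s0 s'0 e0; set m := Num.max s s' => D0.
have sm : s <= m by rewrite le_max lexx.
have s'm : s' <= m by rewrite le_max lexx orbT.
have N0 : 0 <= s * (e + m - s') by rewrite mulr_ge0 //; lra.
rewrite divr_ge0 ?(ltW D0) //= ler_pdivrMr // mul1r.
have -> : m * (e + 2 * m - s - s') =
  s * (e + m - s') + ((m - s) * (e + m - s') + m * (m - s)) by ring.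
by rewrite lerDl addr_ge0 ?mulr_ge0 //; lra.
Qed.

End push_radius.

Lemma push_rad_continuous {R : realType} {T : topologicalType} (f g h : T -> R)
    (x : T) :
  {for x, continuous f} -> {for x, continuous g} -> {for x, continuous h} ->
  push_den (f x) (g x) (h x) != 0 ->
  {for x, continuous (fun z => push_rad (f z) (g z) (h z))}.
Proof.
move=> cf cg ch D0; have cm := continuous_max cf cg.
rewrite /push_rad; apply: cvgM; first by apply: cvgM => //; apply: cvgB => //; apply: cvgD.
apply: cvgV => //; rewrite /push_den; apply: cvgM => //.
by apply: cvgB => //; apply: cvgB => //; apply: cvgD => //; apply: cvgM => //; exact: cvg_cst.
Qed.

Section unit_clamp.
Context {R : realType}.

Lemma unit_clamp_subproof (r : R) : Num.min 1 (Num.max 0 r) \in unit_int R.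
Proof. by rewrite inE /unit_int /= ge_min lexx le_min ler01 le_max lexx. Qed.

Definition unit_clamp (r : R) : unitI R := exist (fun x => x \in unit_int R) _ (unit_clamp_subproof r).

Lemma unit_clampE (r : R) : 0 <= r <= 1 -> val (unit_clamp r) = r.
Proof. by case/andP => r0 r1; rewrite /= max_r // min_r. Qed.

Lemma unit_clamp_le0 (r : R) : r <= 0 -> val (unit_clamp r) = 0.
Proof. by move=> r0; rewrite /= max_l // min_r. Qed.

Lemma continuous_val_unit_clamp : continuous (fun r => val (unit_clamp r)).
Proof.
move=> r /=.
by apply: continuous_min; [exact: cvg_cst | apply: continuous_max => //; exact: cvg_cst].
Qed.

Lemma continuous_unit_clamp : continuous unit_clamp.
Proof. exact: continuous_comp_initial continuous_val_unit_clamp. Qed.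

End unit_clamp.

Lemma cvg_mdist {R : realType} {Y : metricType R} {T} (F : set_system T)
    {FF : Filter F} (f g : T -> Y) (y y' : Y) :
  f @ F --> y -> g @ F --> y' -> (fun z => mdist (f z) (g z)) @ F --> mdist y y'.
Proof.
move=> fy gy'; apply/cvgrPdist_lt => e e0; near=> z.
have d1 : mdist y (f z) < e / 2.
  by near: z; exact: metricType_numDomainType.cvgr_dist_lt fy _ (divr_gt0 e0 _).
have d2 : mdist y' (g z) < e / 2.
  by near: z; exact: metricType_numDomainType.cvgr_dist_lt gy' _ (divr_gt0 e0 _).
have := metric_triangle y (f z) y'; have := metric_triangle (f z) (g z) y'.
have := metric_triangle (f z) y (g z); have := metric_triangle y y' (g z).
rewrite (metric_sym (g z) y') (metric_sym (f z) y) ltr_distl; lra.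
Unshelve. all: by end_near. Qed.

Section cone_separation.
Context {R : realType} {Y : metricType R}.
Local Notation C := (cone (R:=R) Y).

Definition cone_sep (a b : C) : R :=
  Num.min (cone_rad a) (cone_rad b) * Num.min 1 (mdist (cone_dir a) (cone_dir b)).

Lemma cone_sepC (a b : C) : cone_sep a b = cone_sep b a.
Proof. by rewrite /cone_sep minC metric_sym. Qed.

Lemma cone_sep_ge0 (a b : C) : 0 <= cone_sep a b.
Proof. by rewrite mulr_ge0 // le_min ?ler01 ?mdist_ge0 ?cone_rad_ge0. Qed.

Lemma cone_sep_le_rad (a b : C) : cone_sep a b <= Num.min (cone_rad a) (cone_rad b).
Proof.
rewrite -[leRHS]mulr1 ler_wpM2l ?ge_min ?lexx //.
by rewrite le_min !cone_rad_ge0.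
Qed.

Lemma cone_sep_dir (a b : C) : cone_dir a = cone_dir b -> cone_sep a b = 0.
Proof. by move=> ab; rewrite /cone_sep ab mdistxx [Num.min 1 0]min_r ?mulr0. Qed.

Lemma cone_sep_gt0 (a b : C) : 0 < cone_rad a -> 0 < cone_rad b ->
  cone_dir a != cone_dir b -> 0 < cone_sep a b.
Proof.
by move=> a0 b0 ab; rewrite mulr_gt0 // lt_min ?a0 ?b0 ?ltr01 ?mdist_gt0.
Qed.

Lemma cone_sep_continuous : continuous (fun q : C * C => cone_sep q.1 q.2).
Proof.
move=> q; change ((fun p : C * C => cone_sep p.1 p.2) @ q --> cone_sep q.1 q.2).
have crad (i : C * C -> C) : {for q, continuous i} ->
    {for q, continuous (fun p => cone_rad (i p))}.
  by move=> ci; apply: continuous_comp ci _; exact: continuous_cone_rad.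
have cmin : {for q, continuous (fun p : C * C => Num.min (cone_rad p.1) (cone_rad p.2))}.
  by apply: continuous_min; apply: crad; [exact: cvg_fst | exact: cvg_snd].
have [m0|m0] := eqVneq (Num.min (cone_rad q.1) (cone_rad q.2)) 0.
  have -> : cone_sep q.1 q.2 = 0.
    by apply/eqP; rewrite eq_le cone_sep_ge0 andbT -m0 cone_sep_le_rad.
  have cmin0 : (fun p : C * C => Num.min (cone_rad p.1) (cone_rad p.2)) @ q --> 0.
    by rewrite -m0; exact: cmin.
  apply: (squeeze_cvgr _ _ cmin0); last exact: cvg_cst.
  by apply: nearW => p; rewrite cone_sep_ge0 cone_sep_le_rad.
have /andP[q1 q2] : (0 < cone_rad q.1) && (0 < cone_rad q.2).
  by rewrite -lt_min lt0r m0 le_min !cone_rad_ge0.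
apply: cvgM => //.
apply: (@continuous_min _ _ (cst 1) (fun p : C * C => mdist (cone_dir p.1) (cone_dir p.2))).
  exact: cvg_cst.
by apply: cvg_mdist; apply: continuous_comp (cone_dir_continuous _);
  [exact: cvg_fst | exact: q1 | exact: cvg_snd | exact: q2].
Qed.

End cone_separation.

Section deformation.
Context {R : realType} {Y : metricType R}.
Local Notation C := (cone (R:=R) Y).
Implicit Types (a b : C) (t : R).

Definition deform_rad a b t : R :=
  t * cone_rad a + (1 - t) * push_rad (cone_rad a) (cone_rad b) (cone_sep a b).

Definition deform a b t : C := cone_pt (cone_dir a) (unit_clamp (deform_rad a b t)).

Definition deform_pair (x : (C * C) * R) : C * C :=
  (deform x.1.1 x.1.2 x.2, deform x.1.2 x.1.1 x.2).

Lemma cone_neq_far a b : a != b -> cone_rad b <= cone_rad a ->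
  0 < cone_rad a /\ cone_rad b < cone_sep a b + cone_rad a.
Proof.
move=> ab ba; have [rab|rab] := eqVneq (cone_rad a) (cone_rad b); last first.
  have ba' : cone_rad b < cone_rad a by rewrite lt_neqAle eq_sym rab ba.
  have := cone_sep_ge0 a b; have := cone_rad_ge0 b; lra.
have a0 : 0 < cone_rad a.
  rewrite lt0r cone_rad_ge0 andbT; apply: contraNneq ab => a0.
  by apply/eqP; apply: cone_eq => //; left.
have dab : cone_dir a != cone_dir b.
  by apply: contraNneq ab => dab; apply/eqP; apply: cone_eq => //; right.
have b0 : 0 < cone_rad b by rewrite -rab.
have := cone_sep_gt0 a0 b0 dab; lra.
Qed.

Lemma push_den_cone_gt0 a b : a != b ->
  0 < push_den (cone_rad a) (cone_rad b) (cone_sep a b).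
Proof.
wlog ba : a b / cone_rad b <= cone_rad a => [hwlog ab|ab].
  have [ba|/ltW ab'] := leP (cone_rad b) (cone_rad a); first exact: hwlog.
  by rewrite push_denC cone_sepC hwlog // eq_sym.
have [a0 far] := cone_neq_far ab ba.
by rewrite push_denE // mulr_gt0 // subr_gt0.
Qed.

Lemma deform_rad_itv a b t : a != b -> 0 <= t <= 1 -> 0 <= deform_rad a b t <= 1.
Proof.
move=> ab /andP[t0 t1].
have /andP[p0 p1] := push_rad_itv (cone_rad_ge0 a) (cone_rad_ge0 b) (cone_sep_ge0 a b)
  (push_den_cone_gt0 ab).
have a0 := cone_rad_ge0 a; have a1 := cone_rad_le1 a.
by rewrite /deform_rad; apply/andP; split; nra.
Qed.

Lemma cone_rad_deform a b t : a != b -> 0 <= t <= 1 ->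
  cone_rad (deform a b t) = deform_rad a b t.
Proof. by move=> ab t01; rewrite cone_rad_pt unit_clampE // deform_rad_itv. Qed.

Lemma cone_dir_deform a b t : 0 < cone_rad (deform a b t) ->
  cone_dir (deform a b t) = cone_dir a.
Proof. by rewrite cone_rad_pt => ?; rewrite cone_dir_pt. Qed.

Lemma deform_rad_far a b t : a != b -> cone_rad b <= cone_rad a ->
  deform_rad a b t = t * cone_rad a + (1 - t).
Proof.
move=> ab ba; rewrite /deform_rad push_rad_max ?mulr1 // gt_eqF //.
exact: push_den_cone_gt0.
Qed.

Lemma deform_rad_ray a b t : cone_rad b <= cone_rad a -> cone_dir a = cone_dir b ->
  deform_rad b a t = t * cone_rad b.
Proof.
by move=> ba dab; rewrite /deform_rad cone_sep_dir // push_rad_min0 // mulr0 addr0.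
Qed.

Lemma deform1 a b : deform a b 1 = a.
Proof.
rewrite /deform /deform_rad subrr mul0r addr0 mul1r -[RHS]cone_ptK.
by congr cone_pt; apply: val_inj; rewrite unit_clampE // cone_rad_ge0 cone_rad_le1.
Qed.

Lemma deform_neq a b t : a != b -> 0 <= t <= 1 -> deform a b t != deform b a t.
Proof.
wlog ba : a b / cone_rad b <= cone_rad a => [hwlog ab t01|ab t01].
  have [ba|/ltW ab'] := leP (cone_rad b) (cone_rad a); first exact: hwlog.
  by rewrite eq_sym hwlog // eq_sym.
have [a0 _] := cone_neq_far ab ba; have a1 := cone_rad_le1 a.
have ra' := cone_rad_deform ab t01; rewrite deform_rad_far // in ra'.
have a'0 : 0 < cone_rad (deform a b t) by rewrite ra'; case/andP: t01 => *; nra.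
apply/eqP => a'b'.
have dab : cone_dir a = cone_dir b.
  by rewrite -(cone_dir_deform a'0) a'b' cone_dir_deform // -a'b'.
have ba_ne : b != a by rewrite eq_sym.
have := cone_rad_deform ba_ne t01; rewrite deform_rad_ray // -a'b' ra'.
case/andP: t01 => t0 t1 rad_eq.
have t_1 : t = 1 by nra.
move: rad_eq; rewrite t_1 => rad_eq; case/eqP: ab.
by apply: cone_eq; [lra | right].
Qed.

Lemma deform_rad_rim a b t : a != b -> cone_rad b <= cone_rad a ->
  t = 0 \/ cone_corner Y (a, b) -> deform_rad a b t = 1.
Proof.
move=> ab ba hab; rewrite deform_rad_far //.
case: hab => [->|/cone_corner_rad a1]; first lra.
suff -> : cone_rad a = 1 by lra.
by case: a1 => // b1; apply/le_anti; rewrite cone_rad_le1 -b1 ba.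
Qed.

Lemma deform_rad_ray_apex a b t : a != b -> cone_rad b <= cone_rad a ->
  cone_dir a = cone_dir b -> t = 0 \/ cone_corner Y (a, b) -> deform_rad b a t = 0.
Proof.
move=> ab ba dab; rewrite deform_rad_ray // => -[->|hab]; first by rewrite mul0r.
have [b0|b0] := eqVneq (cone_rad b) 0; first by rewrite b0 mulr0.
have [a0 _] := cone_neq_far ab ba.
have [b1|b1] := ltP (cone_rad b) 1.
  exfalso; apply: (cone_corner_dir hab a0 _ (or_intror b1) dab).
  by rewrite lt0r b0 cone_rad_ge0.
case/eqP: ab; apply: cone_eq; last by right.
by apply/le_anti/andP; split => //; exact: le_trans (cone_rad_le1 a) b1.
Qed.

Lemma deform_corner a b t : ~ (exists y0 : Y, forall y, y = y0) ->
  a != b -> 0 <= t <= 1 -> t = 0 \/ cone_corner Y (a, b) ->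
  cone_corner Y (deform a b t, deform b a t).
Proof.
wlog ba : a b / cone_rad b <= cone_rad a => [hwlog Ynt ab t01 hab|Ynt ab t01 hab].
  have [ba|/ltW ab'] := leP (cone_rad b) (cone_rad a); first exact: hwlog.
  apply: cone_corner_swap; apply: hwlog => //; first by rewrite eq_sym.
  by case: hab => [|/cone_corner_swap]; [left|right].
have a'1 := deform_rad_rim ab ba hab.
split; first exact/eqP/deform_neq.
have [dab|dab] := eqVneq (cone_dir a) (cone_dir b); last first.
  exists (cone_dir a), (cone_dir b), (unit_clamp (deform_rad a b t)),
    (unit_clamp (deform_rad b a t)).
  by split => //; [left; rewrite a'1 unit_clampE ?ler01 ?lexx | move=> _; apply/eqP].
have b'0 := deform_rad_ray_apex ab ba dab hab.
(* The nearer point sits at the apex, which can be given a direction other than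
   [cone_dir a]: this is where Y needs two points. *)
have [y' y'a] : exists y', y' <> cone_dir a.
  by apply/existsNP => ya; apply: Ynt; exists (cone_dir a).
exists (cone_dir a), y', (unit_clamp (deform_rad a b t)), (unit_clamp 0); split.
- by congr pair; apply/cone_pt_eqP; right; rewrite b'0 unit_clampE ?lexx ?ler01.
- by left; rewrite a'1 unit_clampE ?ler01 ?lexx.
- by move=> _ /esym.
Qed.

Lemma deform_rad_apex a b t : cone_rad a = 0 -> deform_rad a b t = 0.
Proof. by move=> a0; rewrite /deform_rad /push_rad a0 !(mulr0, mul0r, addr0). Qed.

Lemma deform_rad_continuous {T : topologicalType} (A B : T -> C) (t : T -> R)
    (x : T) :
  {for x, continuous A} -> {for x, continuous B} -> {for x, continuous t} ->
  A x != B x -> {for x, continuous (fun z => deform_rad (A z) (B z) (t z))}.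
Proof.
move=> cA cB ct ABx.
have crad (D : T -> C) : {for x, continuous D} ->
    {for x, continuous (fun z => cone_rad (D z))}.
  by move=> cD; apply: continuous_comp cD _; exact: continuous_cone_rad.
have csep : {for x, continuous (fun z => cone_sep (A z) (B z))}.
  apply: (@continuous_comp _ _ _ (fun z => (A z, B z)) (fun q : C * C => cone_sep q.1 q.2)).
    exact: cvg_pair cA cB.
  exact: cone_sep_continuous.
apply: cvgD; apply: cvgM => //; [exact: crad | by apply: cvgB => //; exact: cvg_cst|].
apply: (@push_rad_continuous _ _ (fun z => cone_rad (A z)) (fun z => cone_rad (B z))
  (fun z => cone_sep (A z) (B z))); [exact: crad | exact: crad | exact: csep |].
by rewrite gt_eqF // push_den_cone_gt0.
Qed.

Lemma deform_continuous {T : topologicalType} (A B : T -> C) (t : T -> R) (x : T) :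
  compact [set: Y] ->
  {for x, continuous A} -> {for x, continuous B} -> {for x, continuous t} ->
  A x != B x -> {for x, continuous (fun z => deform (A z) (B z) (t z))}.
Proof.
move=> cY cA cB ct ABx; have crho := deform_rad_continuous cA cB ct ABx.
have [rho0|rho0] := leP (deform_rad (A x) (B x) (t x)) 0.
  apply: cvg_cone_apex => //; first by rewrite cone_rad_pt unit_clamp_le0.
  have -> : (fun z => cone_rad (deform (A z) (B z) (t z))) =
      (fun z => val (unit_clamp (deform_rad (A z) (B z) (t z)))).
    by apply: funext => z; rewrite cone_rad_pt.
  rewrite -(unit_clamp_le0 rho0).
  apply: (@continuous_comp _ _ _ (fun z => deform_rad (A z) (B z) (t z))
    (fun r => val (unit_clamp r))) => //.
  exact: continuous_val_unit_clamp.
have Ax0 : 0 < cone_rad (A x).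
  rewrite lt0r cone_rad_ge0 andbT; apply: contraTneq rho0.
  by move=> /(deform_rad_apex (B x) (t x)) ->; rewrite ltxx.
apply: (@continuous_comp _ _ _
  (fun z => (cone_dir (A z), unit_clamp (deform_rad (A z) (B z) (t z))))
  (fun p => cone_pt p.1 p.2)); last exact: continuous_cone_pt.
have cdir : {for x, continuous (fun z => cone_dir (A z))}.
  exact: (@continuous_comp _ _ _ A cone_dir x cA (cone_dir_continuous Ax0)).
have cclamp : {for x, continuous (fun z => unit_clamp (deform_rad (A z) (B z) (t z)))}.
  have := @continuous_unit_clamp R (deform_rad (A x) (B x) (t x)).
  exact: continuous_comp crho.
exact: cvg_pair cdir cclamp.
Qed.

Lemma deform_pair_continuous (x : (C * C) * R) : compact [set: Y] ->
  x.1.1 != x.1.2 -> {for x, continuous deform_pair}.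
Proof.
move=> cY x12.
have c11 : {for x, continuous (fun z : (C * C) * R => z.1.1)}.
  exact: (@continuous_comp _ _ _ fst fst x cvg_fst cvg_fst).
have c12 : {for x, continuous (fun z : (C * C) * R => z.1.2)}.
  exact: (@continuous_comp _ _ _ fst snd x cvg_fst cvg_snd).
have c2 : {for x, continuous (fun z : (C * C) * R => z.2)} by exact: cvg_snd.
have x21 : x.1.2 != x.1.1 by rewrite eq_sym.
exact: cvg_pair (deform_continuous cY c11 c12 c2 x12) (deform_continuous cY c12 c11 c2 x21).
Qed.

Lemma deform_pair1 (x : C * C) : deform_pair (x, 1) = x.
Proof. by rewrite /deform_pair /= !deform1 -surjective_pairing. Qed.

Lemma deform_pair_config (x : C * C) t : config C x -> unit_int R t ->
  config C (deform_pair (x, t)).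
Proof. by move=> /eqP x12 t01; apply/eqP/deform_neq. Qed.

Lemma deform_pair_corner (x : C * C) t : ~ (exists y0 : Y, forall y, y = y0) ->
  config C x -> unit_int R t -> t = 0 \/ cone_corner Y x ->
  cone_corner Y (deform_pair (x, t)).
Proof.
by case: x => a b Ynt /eqP ab t01 hab; apply: deform_corner.
Qed.

Lemma deform_pair_within : compact [set: Y] ->
  {within config C `*` unit_int R, continuous deform_pair}.
Proof.
move=> cY; apply: continuous_in_subspaceT => x /set_mem[x12 _].
by apply: deform_pair_continuous => //; apply/eqP.
Qed.

End deformation.

Theorem lemma6p1 (R : realType) (Y : metricType R) :
  compact [set: Y] ->
  ~ (exists y0 : Y, forall y : Y, y = y0) ->
  equiv_htpy_equiv R (config (cone (R:=R) Y)) (@swap _)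
                     (cone_corner (R:=R) Y) (@swap _).
Proof.
move=> cY Ynt; have t0 : unit_int R 0 by rewrite /unit_int /= lexx ler01.
exists (fun x => deform_pair (x, 0)), id; split.
- split; last by apply: continuous_subspaceT => x; exact: cvg_id.
  apply: continuous_in_subspaceT => x /set_mem x12.
  apply: (@continuous_comp _ _ _ (fun x => (x, 0)) deform_pair x).
    exact: cvg_pair cvg_id (cvg_cst _).
  by apply: deform_pair_continuous => //; apply/eqP.
- by split=> [x x12|x []] //; apply: (deform_pair_corner Ynt x12 t0); left.
- by [].
- exists deform_pair; split => //; first exact: deform_pair_within.
    exact: deform_pair_config.
  by move=> x _; rewrite deform_pair1.
- exists deform_pair; split => //.
  + by apply: continuous_subspaceW (deform_pair_within cY) => -[x t] [[]].
  + move=> x t xc t01; case: (xc) => x12 _.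
    by apply: (deform_pair_corner Ynt x12 t01); right.
  + by move=> x _; rewrite deform_pair1.
Qed.
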